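(* Let $B$ be a connected graded commutative algebra over a field $\mathbb{F}$ admitting an action by graded algebra automorphisms of a finite group $\Gamma$ whose order is prime to the characteristic of $\mathbb{F}$, and let $A$ be a graded $\mathbb{F}$-subalgebra of the invariant ring $B^\Gamma$. If $B/\!\!/A=B/\!\!/B^\Gamma$ (i.e. the ideals of $B$ generated by $A^{\geq1}$ and by $(B^\Gamma)^{\geq1}$ coincide), then $A=B^\Gamma$.
   Context: For a connected graded algebra $C$, $C^{\geq1}$ denotes its augmentation ideal (elements of positive degree). For a map $A\to B$ of connected graded algebras, $B/\!\!/A$ denotes $B/f(A^{\geq1})B$. *)

From mathcomp Require Import all_boot all_order all_fingroup all_algebra.
Set Implicit Arguments. Unset Strict Implicit. Unset Printing Implicit Defensive.
Import GRing.Theory.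
Local Open Scope ring_scope.

Section GradedDefs.
Variables (F : fieldType) (B : algType F).

(* A (nonnegative, Z_{>=0}-) grading B = (+)_n B_n, given by the family of
   projections pi n : B -> B_n onto the homogeneous components. *)
Definition is_grading (pi : nat -> B -> B) : Prop :=
  (forall n (c : F) (x y : B), pi n (c *: x + y) = c *: pi n x + pi n y) /\
      (forall x, exists N, forall n, (N <= n)%N -> pi n x = 0) /\
      (forall x N, (forall n, (N <= n)%N -> pi n x = 0) ->
                   x = \sum_(n < N) pi n x) /\
      (forall m n x, pi m (pi n x) = if m == n then pi n x else 0) /\
      pi 0%N 1 = 1 /\
      (forall n x y, pi n (x * y) = \sum_(i < n.+1) pi i x * pi (n - i)%N y).

Definition homog (pi : nat -> B -> B) (n : nat) (x : B) : Prop := pi n x = x.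

Definition connected_grading (pi : nat -> B -> B) : Prop :=
  forall x, exists c : F, pi 0%N x = c%:A.

Definition sign_commutative (pi : nat -> B -> B) : Prop :=
  forall m n x y, homog pi m x -> homog pi n y ->
    x * y = ((-1) ^+ (m * n) : F) *: (y * x).

Definition strictly_commutative : Prop := forall x y : B, x * y = y * x.

Definition graded_subalgebra (pi : nat -> B -> B) (A : B -> Prop) : Prop :=
  [/\ A 1,
      (forall (c : F) x y, A x -> A y -> A (c *: x + y)),
      (forall x y, A x -> A y -> A (x * y)) &
      (forall n x, A x -> A (pi n x))].

Definition aug (pi : nat -> B -> B) (C : B -> Prop) : B -> Prop :=
  fun x => C x /\ pi 0%N x = 0.

Definition ideal_gen (S : B -> Prop) : B -> Prop :=
  fun x => exists n (a b : 'I_n -> B),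
    (forall i, S (a i)) /\ x = \sum_(i < n) a i * b i.

End GradedDefs.

Section ActionDefs.
Variables (F : fieldType) (B : algType F) (gT : finGroupType).

Definition graded_alg_action (pi : nat -> B -> B) (act : gT -> B -> B) : Prop :=
  (forall x, act 1%g x = x) /\
      (forall g h x, act (g * h)%g x = act g (act h x)) /\
      (forall g (c : F) x y, act g (c *: x + y) = c *: act g x + act g y) /\
      (forall g x y, act g (x * y) = act g x * act g y) /\
      (forall g, act g 1 = 1) /\
      (forall g n x, act g (pi n x) = pi n (act g x)).

Definition invariants (act : gT -> B -> B) : B -> Prop :=
  fun x => forall g, act g x = x.

End ActionDefs.

(* Let [R] be the Reynolds operator [b |-> |Γ|^-1 Σ_g g·b], which fixes
   invariants and is [B^Γ]-linear.  A homogeneous invariant [y] of positive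
   degree lies in the ideal [A^{>=1}B], say [y = Σ a_i b_i]; applying [R]
   gives [y = Σ a_i R(b_i)] with invariant coefficients [R(b_i)].  Taking the
   degree-[n] component, each term is a product of an element of [A] with a
   homogeneous invariant of degree < [n], which lies in [A] by induction. *)

From HB Require Import structures.
From mathcomp Require Import all_boot all_order all_fingroup all_algebra.
Import GRing.Theory.
Local Open Scope ring_scope.
Set Implicit Arguments.
Unset Strict Implicit.

Definition linfun (F : fieldType) (B : algType F) (f : B -> B)
  (f_lin : linear f) : {linear B -> B} := HB.pack f (GRing.isLinear.Build _ _ _ _ f f_lin).

Section LinearMap.
Variables (F : fieldType) (B : algType F) (f : B -> B).
Hypothesis f_linear : linear f.

Lemma linear_sum_of I r (P : pred I) (E : I -> B) :
  f (\sum_(i <- r | P i) E i) = \sum_(i <- r | P i) f (E i).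
Proof. exact: (linear_sum (linfun f_linear)). Qed.

Lemma linearZ_of c x : f (c *: x) = c *: f x.
Proof. exact: (linearZZ (linfun f_linear)). Qed.

End LinearMap.

Section Reynolds.
Variables (F : fieldType) (B : algType F).
Variables (gT : finGroupType) (act : gT -> B -> B).
Hypothesis actM : forall g h x, act (g * h)%g x = act g (act h x).
Hypothesis act_linear : forall g, linear (act g).
Hypothesis act_rmorphM : forall g x y, act g (x * y) = act g x * act g y.
Hypothesis card_neq0 : #|gT|%:R != 0 :> F.

Definition reynolds (x : B) : B := #|gT|%:R^-1 *: \sum_(g : gT) act g x.

Lemma reynolds_linear : linear reynolds.
Proof.
move=> c x y; rewrite /reynolds scalerA mulrC -scalerA -scalerDr.
congr (_ *: _).
rewrite scaler_sumr -big_split /=; apply: eq_bigr => g _.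
exact: act_linear.
Qed.

Lemma reynolds_invariant x : invariants act (reynolds x).
Proof.
move=> h; rewrite /reynolds linearZ_of // linear_sum_of //; apply: congr1.
by rewrite [RHS](reindex_inj (mulgI h)); apply: eq_bigr => g _; rewrite actM.
Qed.

Lemma reynolds_id y : invariants act y -> reynolds y = y.
Proof.
move=> y_inv; rewrite /reynolds (eq_bigr (fun=> y)) // sumr_const.
by rewrite -scaler_nat scalerA mulVf // scale1r.
Qed.

Lemma reynolds_mul_invariant a b :
  invariants act a -> reynolds (a * b) = a * reynolds b.
Proof.
move=> a_inv; rewrite /reynolds -scalerAr mulr_sumr.
by congr (_ *: _); apply: eq_bigr => g _; rewrite act_rmorphM a_inv.
Qed.

Lemma invariant_combination n (a b : 'I_n -> B) y :
  invariants act y -> (forall i, invariants act (a i)) ->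
  y = \sum_(i < n) a i * b i -> y = \sum_(i < n) a i * reynolds (b i).
Proof.
move=> y_inv a_inv y_def; rewrite -(reynolds_id y_inv) y_def.
rewrite linear_sum_of; last exact: reynolds_linear.
by apply: eq_bigr => i _; rewrite reynolds_mul_invariant.
Qed.

End Reynolds.

Section Grading.
Variables (F : fieldType) (B : algType F) (pi : nat -> B -> B).
Hypothesis pi_grading : is_grading pi.

Lemma pi_linear n : linear (pi n).
Proof. by case: pi_grading => pi_lin _; exact: pi_lin. Qed.

Lemma pi_pi m n x : pi m (pi n x) = if m == n then pi n x else 0.
Proof. by case: pi_grading => _ [_ [_ [pi_pi _]]]. Qed.

Lemma homog_pi n x : homog pi n (pi n x).
Proof. by rewrite /homog pi_pi eqxx. Qed.

Lemma sum_pi x : exists N, x = \sum_(n < N) pi n x.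
Proof.
case: pi_grading => _ [pi_eventually0 [pi_sum _]].
by have [N piN0] := pi_eventually0 x; exists N; exact: pi_sum.
Qed.

Lemma pi_mul_aug n a r : pi 0 a = 0 ->
  pi n.+1 (a * r) = \sum_(j < n.+1) pi j.+1 a * pi (n - j) r.
Proof.
case: pi_grading => _ [_ [_ [_ [_ pi_mul]]]] a_aug.
by rewrite pi_mul big_ord_recl a_aug mul0r add0r.
Qed.

Section Subalgebra.
Variable A : B -> Prop.
Hypothesis A_graded : graded_subalgebra pi A.

Lemma subalg0 : A 0.
Proof.
case: A_graded => A1 A_lin _ _.
by have := A_lin (-1) 1 1 A1 A1; rewrite scaleN1r addNr.
Qed.

Lemma subalg_scalar (c : F) : A c%:A.
Proof.
by case: A_graded => A1 A_lin _ _; rewrite -[c%:A]addr0; apply: A_lin subalg0.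
Qed.

Lemma subalg_sum (I : Type) (r : seq I) (P : pred I) (G : I -> B) :
  (forall i, P i -> A (G i)) -> A (\sum_(i <- r | P i) G i).
Proof.
case: A_graded => _ A_lin _ _.
have A_add x y : A x -> A y -> A (x + y).
  by move=> Ax Ay; have := A_lin 1 x y Ax Ay; rewrite scale1r.
exact: (big_ind A subalg0 A_add).
Qed.

End Subalgebra.
End Grading.

Section InvariantsGenerated.
Variables (F : fieldType) (B : algType F) (pi : nat -> B -> B).
Variables (gT : finGroupType) (act : gT -> B -> B) (A : B -> Prop).
Hypothesis pi_grading : is_grading pi.
Hypothesis pi_connected : connected_grading pi.
Hypothesis act_graded : graded_alg_action pi act.
Hypothesis card_neq0 : #|gT|%:R != 0 :> F.
Hypothesis A_graded : graded_subalgebra pi A.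
Hypothesis A_invariant : forall x, A x -> invariants act x.
Hypothesis aug_invariants_sub :
  forall x, ideal_gen (aug pi (invariants act)) x -> ideal_gen (aug pi A) x.

Lemma invariant_pi n y : invariants act y -> invariants act (pi n y).
Proof.
by case: act_graded => _ [_ [_ [_ [_ act_pi]]]] y_inv g; rewrite act_pi y_inv.
Qed.

Lemma homog_invariant_subalg n y : invariants act y -> homog pi n y -> A y.
Proof.
case: act_graded => _ [actM [act_lin [act_mul _]]].
elim/ltn_ind: n y => -[|n] IH y y_inv y_homog.
  have [c y0] := pi_connected y.
  by rewrite -y_homog y0; exact: (subalg_scalar A_graded).
have y_aug : aug pi (invariants act) y.
  by split; rewrite // -y_homog (pi_pi pi_grading).
have [m [a [b [a_aug y_def]]]] : ideal_gen (aug pi A) y.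
  apply/aug_invariants_sub; exists 1%N, (fun=> y), (fun=> 1).
  by rewrite big_ord1 mulr1.
have a_inv i : invariants act (a i) by apply: A_invariant; case: (a_aug i).
rewrite -y_homog.
rewrite (invariant_combination act_lin act_mul card_neq0 y_inv a_inv y_def).
rewrite linear_sum_of; last exact: pi_linear.
apply: (subalg_sum A_graded) => i _; have [Aai ai0] := a_aug i.
rewrite (pi_mul_aug pi_grading) //; apply: (subalg_sum A_graded) => j _.
case: A_graded => _ _ A_mul A_pi; apply: A_mul; first exact: A_pi.
apply: (IH (n - j)%N); first by rewrite ltnS leq_subr.
  exact/invariant_pi/(reynolds_invariant actM act_lin).
exact: (homog_pi pi_grading).
Qed.

End InvariantsGenerated.

Unset Implicit Arguments.

Theorem lemmaA12 (F : fieldType) (B : algType F) (pi : nat -> B -> B)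
    (gT : finGroupType) (act : gT -> B -> B) (A : B -> Prop) :
  is_grading pi -> connected_grading pi ->
  (strictly_commutative B \/ sign_commutative pi) ->
  graded_alg_action pi act ->
  (#|[set: gT]|)%:R != 0 :> F ->
  graded_subalgebra pi A ->
  (forall x, A x -> invariants act x) ->
  (forall x, ideal_gen (aug pi A) x <-> ideal_gen (aug pi (invariants act)) x) ->
  forall x, A x <-> invariants act x.
Proof.
move=> pi_grading pi_connected _ act_graded card_neq0 A_graded A_inv ideal_eq x.
rewrite cardsT in card_neq0.
split=> [/A_inv // | x_inv].
have [N ->] := sum_pi pi_grading x.
apply: (subalg_sum A_graded) => n _.
apply: (homog_invariant_subalg pi_grading pi_connected act_graded card_neq0
          A_graded A_inv).
- by move=> y /ideal_eq.
- exact: invariant_pi.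
- exact: homog_pi.
Qed.
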